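(* Let $(A,\mathit{Con},\mid\!\sim)$ be an abstract nonmonotonic system and $(B,\mathit{Con}^*,\Delta)$ the normal default structure constructed from it as described in the context. If $P,Q\in\mathit{Con}$ satisfy $Q\subseteq P\subseteq\widetilde{Q}$, then $\widetilde{Q}\cup\{[Q]\}$ is an extension of $P$ in $(B,\mathit{Con}^*,\Delta)$.
   Context: An abstract nonmonotonic system is a triple $(A,\mathit{Con},\mid\!\sim)$ where $\mathit{Con}$ is a collection of finite subsets of $A$ and $\mid\!\sim\ \subseteq\mathit{Con}\times\mathit{Con}$, satisfying: (1) $X\subseteq Y\in\mathit{Con}\Rightarrow X\in\mathit{Con}$; (2) $a\in A\Rightarrow\{a\}\in\mathit{Con}$; (3) $X\mid\!\sim T\Rightarrow X\cup T\in\mathit{Con}$; (4) $Y\subseteq X\Rightarrow X\mid\!\sim Y$; (5) $X\mid\!\sim T$ and $T\cup X\mid\!\sim Y$ imply $X\mid\!\sim Y$; (6) $X\mid\!\sim Y$ and $X\mid\!\sim Z$ imply $X\mid\!\sim Y\cup Z$. Write $X\mid\!\sim a$ for $X\mid\!\sim\{a\}$, and $\widetilde{X}:=\{t\mid X\mid\!\sim\{t\}\}$. Construction: $B:=A\cup\{[X]\mid X\in\mathit{Con}\}$, where $[X]$ are new pairwise distinct tokens. $\Delta:=\{\frac{X:[X]}{[X]}\mid X\in\mathit{Con}\}\cup\{\frac{\{[X]\}:a}{a}\mid X\mid\!\sim a,\ a\notin X\}$. For finite $W\subseteq B$, $W\in\mathit{Con}^*$ iff (i) $W\cap A\in\mathit{Con}$;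 (ii) $W$ contains at most one token of the form $[X]$; (iii) if $[X]\in W$ then $X\mid\!\sim W\setminus\{[X]\}$. An arbitrary subset of $B$ is consistent if all its finite subsets are in $\mathit{Con}^*$. Extensions in $(B,\mathit{Con}^*,\Delta)$: for consistent $x\subseteq B$ and $S\subseteq B$, $\phi(x,S,0)=x$, $\phi(x,S,i+1)=\phi(x,S,i)\cup\{a\mid\frac{X:a}{a}\in\Delta,\ X\subseteq\phi(x,S,i),\ \{a\}\cup S\text{ consistent}\}$, $\Phi(x,S)=\bigcup_i\phi(x,S,i)$; $y$ is an extension of $x$ if $\Phi(x,y)=y$. *)

From Stdlib Require Import List.

Definition set (T : Type) := T -> Prop.
Definition subset {T} (X Y : set T) : Prop := forall x, X x -> Y x.
Definition union {T} (X Y : set T) : set T := fun x => X x \/ Y x.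
Definition single {T} (a : T) : set T := fun x => x = a.
Definition finite {T} (X : set T) : Prop :=
  exists l : list T, forall x, X x -> In x l.

Record ANS (A : Type) := {
  Con : set A -> Prop;
  nm  : set A -> set A -> Prop;
  Con_finite : forall X, Con X -> finite X;
  nm_Con : forall X Y, nm X Y -> Con X /\ Con Y;
  ax1 : forall X Y, subset X Y -> Con Y -> Con X;
  ax2 : forall a, Con (single a);
  ax3 : forall X T, nm X T -> Con (union X T);
  ax4 : forall X Y, Con X -> subset Y X -> nm X Y;
  ax5 : forall X T Y, nm X T -> nm (union T X) Y -> nm X Y;
  ax6 : forall X Y Z, nm X Y -> nm X Z -> nm X (union Y Z)
}.
Arguments Con {A} _ _.
Arguments nm {A} _ _ _.

Section Construction.
Context {A : Type} (N : ANS A).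

Definition tilde (X : set A) : set A := fun t => nm N X (single t).

(* B = A ∪ { [X] | X ∈ Con } *)
Definition B : Type := (A + { X : set A | Con N X })%type.
Definition token (X : set A) (h : Con N X) : B := inr (exist _ X h).

Definition partA (W : set B) : set A := fun a => W (inl a).
Definition liftA (X : set A) : set B :=
  fun b => match b with inl a => X a | inr _ => False end.

(* Con* on finite subsets of B.  Condition (iii): since W contains at most
   one token, W \ {[X]} = W ∩ A. *)
Definition ConStar (W : set B) : Prop :=
  finite W /\
  Con N (partA W) /\
  (forall X Y, W (inr X) -> W (inr Y) -> X = Y) /\
  (forall X, W (inr X) -> nm N (proj1_sig X) (partA W)).

Definition consistent (S : set B) : Prop :=
  forall W, finite W -> subset W S -> ConStar W.

(* Normal defaults  X : b / b, given as (prerequisite, conclusion). *)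
Definition Delta (X : set B) (b : B) : Prop :=
  (exists Y (h : Con N Y), X = liftA Y /\ b = token Y h) \/
  (exists Y (h : Con N Y) a, nm N Y (single a) /\ ~ Y a /\
      X = single (token Y h) /\ b = inl a).

Fixpoint phi (x S : set B) (i : nat) : set B :=
  match i with
  | 0 => x
  | Datatypes.S i' => fun b => phi x S i' b \/
      exists X, Delta X b /\ subset X (phi x S i') /\ consistent (union (single b) S)
  end.

Definition Phi (x S : set B) : set B := fun b => exists i, phi x S i b.

Definition extension (x y : set B) : Prop :=
  consistent x /\ forall b, Phi x y b <-> y b.

End Construction.

From Stdlib Require Import List Classical ProofIrrelevance.

(* Every finite subset of [tilde Q] is inferred from [Q]: singletons are
   inferred by definition and combined with cumulative conjunction (ax6).
   With this, every finite part of [tilde Q ∪ {[Q]}] meets condition (iii)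
   of Con*.  Conversely a default with conclusion [[Y]] can only fire when
   [[Y]] is consistent with [[Q]], i.e. [Y = Q], so the only defaults that
   fire from [P] yield [[Q]] and then the conclusions [a] with [Q |~ a]. *)

Section NonmonotonicSystem.
Context {A : Type} (N : ANS A).

Lemma nm_subset (X Y Y' : set A) : nm N X Y -> subset Y' Y -> nm N X Y'.
Proof.
  intros HXY HY'.
  apply (ax5 _ N X Y); [exact HXY|].
  apply ax4; [|intros t Ht; left; exact (HY' t Ht)].
  apply (ax1 _ N _ (union X Y)); [intros t [?|?]; [right|left]; assumption|].
  exact (ax3 _ N X Y HXY).
Qed.

Lemma nm_finite_tilde (Q Z : set A) :
  Con N Q -> finite Z -> subset Z (tilde N Q) -> nm N Q Z.
Proof.
  intros HQ [l Hl]; revert Z Hl.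
  induction l as [|x l IH]; intros Z Hl HZ.
  - apply ax4; [exact HQ|]. intros t Zt; destruct (Hl t Zt).
  - set (Z' := fun t => Z t /\ t <> x).
    assert (HZ' : nm N Q Z').
    { apply IH; [|intros t [Zt _]; exact (HZ t Zt)].
      intros t [Zt ne]; destruct (Hl t Zt); [congruence|assumption]. }
    destruct (classic (Z x)) as [Zx|nZx].
    + apply (nm_subset Q (union (single x) Z')).
      * exact (ax6 _ N _ _ _ (HZ x Zx) HZ').
      * intros t Zt; destruct (classic (t = x)); [left|right; split]; assumption.
    + apply (nm_subset Q Z' Z HZ'). intros t Zt; split; congruence.
Qed.

Lemma finite_partA (W : set (B N)) : finite W -> finite (partA N W).
Proof.
  intros [l Hl].
  exists (flat_map (fun b : B N => match b with inl a => a :: nil | inr _ => nil end) l).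
  intros a Wa; apply in_flat_map; exists (inl a); split; [exact (Hl _ Wa)|left; reflexivity].
Qed.

Lemma consistent_union_single (S : set (B N)) (b : B N) :
  consistent N S -> S b -> consistent N (union (single b) S).
Proof.
  intros HS Sb W Wf WS; apply HS; [exact Wf|].
  intros c Wc; destruct (WS c Wc) as [->|]; assumption.
Qed.

Lemma consistent_token_unique (S : set (B N)) (X Y : set A) hX hY :
  consistent N S -> S (token N X hX) -> S (token N Y hY) -> X = Y.
Proof.
  intros HS SX SY.
  assert (CS : ConStar N (union (single (token N X hX)) (single (token N Y hY)))).
  { apply HS.
    - exists (token N X hX :: token N Y hY :: nil).
      intros b [->| ->]; [left|right; left]; reflexivity.
    - intros b [->| ->]; assumption. }
  destruct CS as [_ [_ [Huniq _]]].
  exact (f_equal (@proj1_sig _ _)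
           (Huniq (exist _ X hX) (exist _ Y hY) (or_introl eq_refl) (or_intror eq_refl))).
Qed.

Lemma consistent_liftA (P : set A) : Con N P -> consistent N (liftA N P).
Proof.
  intros HP W Wf WP; repeat split.
  - exact Wf.
  - apply (ax1 _ N _ P); [intros a Wa; exact (WP _ Wa)|exact HP].
  - intros X Y WX; destruct (WP _ WX).
  - intros X WX; destruct (WP _ WX).
Qed.

Lemma phi_step (x y X : set (B N)) (b : B N) (i : nat) :
  Delta N X b -> subset X (phi N x y i) -> consistent N (union (single b) y) ->
  phi N x y (S i) b.
Proof. intros; right; exists X; auto. Qed.

Definition tilde_token (Q : set A) : set (B N) :=
  fun b => match b with
           | inl t => tilde N Q t
           | inr X => proj1_sig X = Q
           end.

Section Extension.
Variables (P Q : set A).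
Hypothesis HQ : Con N Q.

Lemma consistent_tilde_token : consistent N (tilde_token Q).
Proof.
  intros W Wf WQ.
  assert (HW : nm N Q (partA N W)).
  { apply nm_finite_tilde; [exact HQ|exact (finite_partA W Wf)|].
    intros a Wa; exact (WQ _ Wa). }
  repeat split.
  - exact Wf.
  - apply (ax1 _ N _ (union Q (partA N W))); [intros a Wa; right; exact Wa|].
    exact (ax3 _ N _ _ HW).
  - intros [X hX] [Y hY] WX WY.
    pose proof (WQ _ WX) as EX; pose proof (WQ _ WY) as EY; simpl in EX, EY; subst X Y.
    f_equal; apply proof_irrelevance.
  - intros X WX. rewrite (WQ _ WX : proj1_sig X = Q). exact HW.
Qed.

Lemma phi_sub_tilde_token (i : nat) :
  subset P (tilde N Q) -> subset (phi N (liftA N P) (tilde_token Q) i) (tilde_token Q).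
Proof.
  intros HPQ; induction i as [|i IH]; intros b Hb.
  - destruct b as [a|X]; [exact (HPQ a Hb)|destruct Hb].
  - destruct Hb as [Hb|[X [HD [HX Hc]]]]; [exact (IH b Hb)|].
    destruct HD as [[Y [h [-> ->]]]|[Y [h [a [Ya [_ [-> ->]]]]]]].
    + (* [[Y]] and [[Q]] lie in one consistent set *)
      exact (consistent_token_unique _ Y Q h HQ Hc (or_introl eq_refl) (or_intror eq_refl)).
    + assert (EY : Y = Q) by exact (IH _ (HX _ eq_refl)).
      subst Y; exact Ya.
Qed.

Lemma tilde_token_sub_Phi :
  subset Q P -> subset (tilde_token Q) (Phi N (liftA N P) (tilde_token Q)).
Proof.
  intros HQP.
  assert (Htok : forall h, phi N (liftA N P) (tilde_token Q) 1 (token N Q h)).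
  { intro h; apply (phi_step _ _ (liftA N Q)).
    - left; exists Q, h; split; reflexivity.
    - intros [a|X] Qa; [exact (HQP a Qa)|destruct Qa].
    - apply consistent_union_single; [exact consistent_tilde_token|reflexivity]. }
  intros [a|[X h]] Hb.
  - destruct (classic (Q a)) as [Qa|nQa]; [exists 0; exact (HQP a Qa)|].
    exists 2; apply (phi_step _ _ (single (token N Q HQ))).
    + right; exists Q, HQ, a; repeat split; assumption.
    + intros b ->; apply Htok.
    + apply consistent_union_single; [exact consistent_tilde_token|exact Hb].
  - simpl in Hb; subst X; exists 1; apply Htok.
Qed.

End Extension.
End NonmonotonicSystem.

Theorem lemma3 (A : Type) (N : ANS A) (P Q : set A)
  (HP : Con N P) (HQ : Con N Q)
  (HQP : subset Q P) (HPQ : subset P (tilde N Q)) :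
  extension N (liftA N P)
    (fun b : B N => match b with
                    | inl t => tilde N Q t
                    | inr X => proj1_sig X = Q
                    end).
Proof.
  split; [exact (consistent_liftA N P HP)|].
  intro b; split.
  - intros [i Hi]; exact (phi_sub_tilde_token N P Q HQ i HPQ b Hi).
  - exact (tilde_token_sub_Phi N P Q HQ HQP b).
Qed.
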